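(* Consider the bandit setting of the Dd-MDP problem with a finite policy collection $\Gamma$, and suppose the instance satisfies the stateless chasability condition with parameter $\sigma>0$ via a chasing oracle applicable to the bandit setting. Then for every period length $\tau>\sigma$, the regret of algorithm C\&S-FLP on a $T$-round instance is $O\!\left(\frac{\sigma T}{\tau}+\sqrt{|\Gamma|\,T\tau}\right)$.
   Context: Dd-MDP: finite state set $\mathcal S$, finite action set $\mathcal X$, feasible sets $X_s\subseteq\mathcal X$; $T$ rounds from initial state $s_1$. In round $t$ the decision maker plays a (possibly randomized) $x_t\in X_{s_t}$, the adversary simultaneously chooses a transition function $g_t$ and a reward function $f_t$ (values in $[0,1]$), $s_{t+1}=g_t(s_t,x_t)$ and the reward is $f_t(s_t,x_t)$. In the bandit setting, after round $t$ the decision maker observes only $f_t(s_t,x_t)$ and the function $g_t$. A policy is $\gamma:\mathcal S\to\mathcal X$ with $\gamma(s)\in X_s$, simulated by $s^\gamma_1=s_1$, $x^\gamma_t=\gamma(s^\gamma_t)$, $s^\gamma_{t+1}=g_t(s^\gamma_t,x^\gamma_t)$. Regret: $\max_{\gamma\in\Gamma}\sum_tf_t(s^\gamma_t,x^\gamma_t)-\sum_t\mathbb{E}[f_t(s_t,x_t)]$. Chasing oracle: for any target $\gamma\in\Gamma$, started at round $t_{\mathrm{init}}$ from any state $s_{\mathrm{init}}$, it outputs actions $\hat x(t)$ feasible for $\hat s(t)$ ($\hat s(t_{\mathrm{init}})=s_{\mathrm{init}}$, $\hat s(t)=g_{t-1}(\hat s(t-1),\hat x(t-1))$) with chasing regret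 $\sum_{t=t_{\mathrm{init}}}^{t_{\mathrm{final}}}f_t(s^\gamma_t,x^\gamma_t)-\sum_{t=t_{\mathrm{init}}}^{t_{\mathrm{final}}}\mathbb{E}[f_t(\hat s(t),\hat x(t))]\le\sigma$ for every $t_{\mathrm{final}}\ge t_{\mathrm{init}}$. It is applicable to the bandit setting if each $\hat x(t)$ depends only on $s_{\mathrm{init}}$, the realized rewards $f_{t'}(\hat s(t'),\hat x(t'))$ and the functions $g_{t'}$ for $t'\in[t_{\mathrm{init}},t-1]$. Stateless chasability with parameter $\sigma$: such an oracle exists and additionally, for every target $\gamma$, every $t_{\mathrm{init}}$, every $t_{\mathrm{final}}\ge t_{\mathrm{init}}$ and any two initial states $s_{\mathrm{init}},s'_{\mathrm{init}}$, the expected cumulative rewards $\sum_{t=t_{\mathrm{init}}}^{t_{\mathrm{final}}}\mathbb{E}[f_t(\hat s(t),\hat x(t))]$ of the two runs coincide. Multiarmed bandit (MBP): arms $\Gamma$, $\Psi$ rounds; in round $\psi$ the adversary fixes $F_\psi:\Gamma\to[0,1]$, the algorithm picks $\gamma_\psi$ and observes only $F_\psi(\gamma_\psi)$; regret $\max_\gamma\sum_\psi F_\psi(\gamma)-\sum_\psi\mathbb{E}[F_\psi(\gamma_\psi)]$. INF denotes an MBP algorithm with regret $O(\sqrt{|\Gamma|\Psi})$. Algorithm C\&S-FLP: split the rounds into consecutive periods of $\tau$ rounds (the last may be shorter). At the start of period $\psi$, INF picks $\gamma_\psi\in\Gamma$; a fresh run of the chasing oracle is started with target $\gamma_\psi$,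 initial round $(\psi-1)\tau+1$ and initial state $s_{(\psi-1)\tau+1}$; throughout the period the algorithm plays the oracle's actions, feeding it the realized rewards and $g_t$. At the period's end (round $t=\min\{T,\psi\tau\}$), INF is fed the reward $F_\psi(\gamma_\psi)=\frac1\tau\sum_{t'=(\psi-1)\tau+1}^{t}f_{t'}(s_{t'},x_{t'})$. *)

From mathcomp Require Import all_boot all_order all_algebra.
From mathcomp Require Import Rstruct.
From Stdlib Require Import Rdefinitions.
Set Implicit Arguments. Unset Strict Implicit. Unset Printing Implicit Defensive.
Import Order.TTheory GRing.Theory Num.Theory.
Local Open Scope ring_scope.

(* A (finitely supported) probability distribution on T, as a list of
   (weight, outcome) pairs; dvalid: weights nonnegative and summing to 1. *)
Definition dist (T : Type) := seq (R * T).
Definition dvalid (T : Type) (d : dist T) : bool :=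
  all (fun e => 0 <= e.1) d && (\sum_(e <- d) e.1 == 1).
Definition dE (T : Type) (d : dist T) (h : T -> R) : R :=
  \sum_(e <- d) e.1 * h e.2.

Section DdMDP.
Variables (S X : finType).
Variable (f : nat -> S -> X -> R).  (* reward functions f_t, rounds t = 1,2,... *)
Variable (g : nat -> S -> X -> S).

(* State of the simulated policy gam at round t.+1 (so round 1 is pstate 0). *)
Fixpoint pstate (s1 : S) (gam : S -> X) (t : nat) : S :=
  match t with
  | 0 => s1
  | t'.+1 => let s := pstate s1 gam t' in g t (s) (gam s)
  end.

Definition polsum (s1 : S) (gam : S -> X) (t0 tf : nat) : R :=
  \sum_(t0 <= t < tf.+1) f t (pstate s1 gam t.-1) (gam (pstate s1 gam t.-1)).

(* Bandit-setting information of a chasing-oracle run: for each past round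
   of the run, the oracle's own action, the realized reward f_t'(s,x) and the
   transition function g_t'. *)
Definition hist := seq (X * R * (S -> X -> S)).

(* Chasing oracle applicable to the bandit setting: given the target policy,
   the initial round t_init, the initial state s_init and the bandit history
   of the run so far, a (randomized) choice of the next action. *)
Definition oracle := (S -> X) -> nat -> S -> hist -> dist X.

Definition histState (s0 : S) (h : hist) : S :=
  foldl (fun s e => e.2 s e.1.1) s0 h.

Fixpoint histFeas (feas : S -> X -> bool) (s0 : S) (h : hist) : bool :=
  match h with
  | [::] => true
  | e :: h' => feas s0 e.1.1 && histFeas feas (e.2 s0 e.1.1) h'
  end.

(* Running the randomized oracle strategy d for n rounds starting at round t
   in state s with history h and accumulated reward acc; the result is the
   expectation of k (final state) (total accumulated reward). *)
Fixpoint orun (d : hist -> dist X) (n t : nat) (s : S) (h : hist) (acc : R)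
    (k : S -> R -> R) : R :=
  match n with
  | 0 => k s acc
  | n'.+1 =>
      dE (d h) (fun x =>
        orun d n' t.+1 (g t s x) (rcons h (x, f t s x, g t)) (acc + f t s x) k)
  end.

Definition oexp (O : oracle) (gam : S -> X) (t0 : nat) (s0 : S) (n : nat) : R :=
  orun (O gam t0 s0) n t0 s0 [::] 0 (fun _ r => r).

Definition oracle_valid (feas : S -> X -> bool) (O : oracle) : Prop :=
  forall gam t0 s0 (h : hist),
    dvalid (O gam t0 s0 h) /\
    (histFeas feas s0 h ->
       all (fun e => (0 < e.1) ==> feas (histState s0 h) e.2) (O gam t0 s0 h)).

(* Chasing regret at most sigma, for every target in Gamma = range pol,
   every 1 <= t_init <= t_final <= T and every initial state. *)
Definition chasing (A : finType) (pol : A -> S -> X) (O : oracle)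
    (s1 : S) (T : nat) (sigma : R) : Prop :=
  forall (a : A) (t0 tf : nat) (s0 : S), (1 <= t0)%nat -> (t0 <= tf)%nat -> (tf <= T)%nat ->
    polsum s1 (pol a) t0 tf - oexp O (pol a) t0 s0 (tf - t0).+1 <= sigma.

Definition stateless (A : finType) (pol : A -> S -> X) (O : oracle) (T : nat) : Prop :=
  forall (a : A) (t0 tf : nat) (s0 s0' : S), (1 <= t0)%nat -> (t0 <= tf)%nat -> (tf <= T)%nat ->
    oexp O (pol a) t0 s0 (tf - t0).+1 = oexp O (pol a) t0 s0' (tf - t0).+1.
End DdMDP.

(* An MBP algorithm: for every finite arm set A and horizon Psi, a randomized
   choice of the next arm given the bandit history (chosen arm, observed
   reward) of the previous rounds. *)
Definition mbp_alg := forall (A : finType), nat -> seq (A * R) -> dist A.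

(* Bandit game against an adaptive randomized adversary: in each round the
   adversary draws an outcome w (of an arbitrary type Om) from env h, where h
   is the full past of the game, which fixes the reward function F w : A -> R;
   simultaneously the algorithm draws an arm a from its strategy applied to
   its bandit observations, and observes F w a.  mbp_val returns the expected
   sum over the n remaining rounds of pay w a. *)
Fixpoint mbp_val (A : finType) (Om : Type) (alg : seq (A * R) -> dist A)
    (env : seq (Om * A) -> dist Om) (F : Om -> A -> R) (pay : Om -> A -> R)
    (n : nat) (h : seq (Om * A)) : R :=
  match n with
  | 0 => 0
  | n'.+1 =>
      dE (env h) (fun w =>
        dE (alg [seq (e.2, F e.1 e.2) | e <- h]) (fun a =>
          pay w a + mbp_val alg env F pay n' (rcons h (w, a))))
  end.

Definition mbp_guarantee (alg : mbp_alg) (C : R) : Prop :=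
  forall (A : finType) (Om : Type) (Psi : nat)
         (env : seq (Om * A) -> dist Om) (F : Om -> A -> R),
    (0 < #|A|)%nat ->
    (forall h, dvalid (env h) &&
               all (fun e => [forall a, 0 <= F e.2 a <= 1]) (env h)) ->
    forall b : A,
      mbp_val (@alg A Psi) env F (fun w _ => F w b) Psi [::]
      - mbp_val (@alg A Psi) env F F Psi [::]
      <= C * Num.sqrt (#|A|%:R * Psi%:R).

Section CSFLP.
Variables (S X A : finType).
Variables (f : nat -> S -> X -> R) (g : nat -> S -> X -> S).
Variables (pol : A -> S -> X) (O : oracle S X) (INF : mbp_alg).
Variables (tau T : nat).

Definition nperiods : nat := (T + tau.-1) %/ tau.

(* Expected total reward of periods psi, psi+1, ... (k of them), starting in
   state s with INF-history ih.  Period psi covers rounds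
   (psi-1)tau+1 .. min(T, psi tau). *)
Fixpoint csval (k psi : nat) (s : S) (ih : seq (A * R)) : R :=
  match k with
  | 0 => 0
  | k'.+1 =>
      let t0 := ((psi.-1 * tau).+1)%nat in
      let len := (minn T (psi * tau) - psi.-1 * tau)%nat in
      dE (@INF A nperiods ih) (fun a =>
        orun f g (O (pol a) t0 s) len t0 s [::] 0
          (fun s' r => r + csval k' psi.+1 s' (rcons ih (a, r / tau%:R))))
  end.

Definition csflp_reward (s1 : S) : R := csval nperiods 1 s1 [::].
End CSFLP.

From mathcomp Require Import all_boot all_order all_algebra.
From mathcomp Require Import Rstruct.
From Stdlib Require Import Rdefinitions.
From mathcomp Require Import ring lra zify.
Set Implicit Arguments. Unset Strict Implicit. Unset Printing Implicit Defensive.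
Import Order.TTheory GRing.Theory Num.Theory.
Local Open Scope ring_scope.

(* C&S-FLP is the bandit algorithm INF playing against an adaptive adversary
   whose outcome in period psi is a family, indexed by the arms a, of
   independent runs of the oracle chasing pol a over the period, all started
   from the state reached so far; arm a earns the reward of its run divided by
   tau.  The rewards of the played arms add up to the reward of C&S-FLP over
   tau.  By statelessness the expected reward of a fixed arm b in a period is
   that of the oracle chasing pol b from s1, which by chasability is at least
   the reward of pol b on that period minus sigma.  Summing over the
   N = ceil(T/tau) <= T/tau + 1 periods, the regret is at most
   N sigma + tau C sqrt(|Gamma| N) = O(sigma T/tau + sqrt(|Gamma| T tau));
   when T < tau the regret is simply at most T <= sqrt(|Gamma| T tau). *)

Definition dunit (T : Type) (y : T) : dist T := [:: (1, y)].

Definition dbind (T U : Type) (d : dist T) (D : T -> dist U) : dist U :=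
  flatten [seq [seq (e.1 * e'.1, e'.2) | e' <- D e.2] | e <- d].

Section Expectation.
Variables (T U : Type).
Implicit Types (d : dist T) (h : T -> R).

Lemma dE_unit (y : T) h : dE (dunit y) h = h y.
Proof. by rewrite /dE big_cons big_nil /= mul1r addr0. Qed.

Lemma dE_bind d (D : T -> dist U) (h : U -> R) :
  dE (dbind d D) h = dE d (fun y => dE (D y) h).
Proof.
rewrite /dE /dbind big_flatten /= big_map; apply: eq_bigr => e _.
by rewrite big_map mulr_sumr; apply: eq_bigr => e' _ /=; rewrite mulrA.
Qed.

Lemma eq_dE d h1 h2 : h1 =1 h2 -> dE d h1 = dE d h2.
Proof. by move=> eq_h; apply: eq_bigr => e _; rewrite eq_h. Qed.

Lemma dE_swap d (d' : dist U) (h : T -> U -> R) :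
  dE d (fun x => dE d' (h x)) = dE d' (fun y => dE d (h^~ y)).
Proof.
rewrite /dE; under eq_bigr do rewrite mulr_sumr.
rewrite exchange_big; apply: eq_bigr => e' _; rewrite mulr_sumr.
by apply: eq_bigr => e _; rewrite mulrCA.
Qed.

Lemma dE_const d c : dvalid d -> dE d (fun _ => c) = c.
Proof. by case/andP=> _ /eqP sum1; rewrite /dE -mulr_suml sum1 mul1r. Qed.

Lemma dE_add d h1 h2 : dE d (fun x => h1 x + h2 x) = dE d h1 + dE d h2.
Proof. by rewrite /dE -big_split; apply: eq_bigr => e _; rewrite mulrDr. Qed.

Lemma mulr_dEl d h c : dE d h * c = dE d (fun x => h x * c).
Proof. by rewrite /dE mulr_suml; apply: eq_bigr => e _; rewrite mulrA. Qed.

Lemma dE_ge0 d h :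
  all (fun e => 0 <= e.1) d -> all (fun e => 0 <= h e.2) d -> 0 <= dE d h.
Proof.
elim: d => [|e d IHd] /=; first by rewrite /dE big_nil.
rewrite /dE big_cons => /andP[e_ge0 d_ge0] /andP[he_ge0 hd_ge0].
by rewrite addr_ge0 ?mulr_ge0 ?IHd.
Qed.

Lemma dunit_valid (y : T) : dvalid (dunit y).
Proof. by rewrite /dvalid /= ler01 big_cons big_nil addr0 eqxx. Qed.

Lemma all_dbind d (D : T -> dist U) (Q : pred T) (P : pred U) :
  all (fun e => Q e.2) d -> (forall y, Q y -> all (fun e => P e.2) (D y)) ->
  all (fun e => P e.2) (dbind d D).
Proof.
rewrite /dbind; elim: d => [|e d IHd] //= /andP[Qe Qd] DP.
by rewrite all_cat IHd // andbT all_map; apply: sub_all (DP _ Qe) => e'.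
Qed.
End Expectation.

Lemma dbind_valid (T U : Type) (d : dist T) (D : T -> dist U) :
  dvalid d -> (forall y, dvalid (D y)) -> dvalid (dbind d D).
Proof.
move=> dV DV; apply/andP; split.
  case/andP: dV => + _; rewrite /dbind; elim: d => [|e d IHd] //= /andP[e_ge0 d_ge0].
  rewrite all_cat IHd // andbT all_map; case/andP: (DV e.2) => De_ge0 _.
  by apply: sub_all De_ge0 => e' /= e'_ge0; apply: mulr_ge0.
have -> : \sum_(e <- dbind d D) e.1 = dE (dbind d D) (fun _ => 1).
  by rewrite /dE; apply: eq_bigr => e _; rewrite mulr1.
by rewrite dE_bind (eq_dE _ (fun y => dE_const 1 (DV y))) dE_const.
Qed.

Section IndependentProduct.
Variables (A : finType) (Y : Type) (y0 : Y) (ds : A -> dist Y).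

(* The joint law of independent draws from [ds a], [a \in l]; coordinates
   outside [l] are fixed to [y0]. *)
Fixpoint dprod (l : seq A) : dist (A -> Y) :=
  match l with
  | [::] => dunit (fun _ => y0)
  | a :: l' => dbind (ds a) (fun y => dbind (dprod l')
                 (fun w => dunit (fun x => if x == a then y else w x)))
  end.

Lemma all_dprod (P : A -> pred Y) l :
  (forall a, all (fun e => P a e.2) (ds a)) ->
  all (fun e => [forall a, (a \in l) ==> P a (e.2 a)]) (dprod l).
Proof.
move=> dsP; elim: l => [|b l IHl] /=.
  by rewrite andbT; apply/forallP.
pose Pl (l : seq A) (w : A -> Y) := [forall a, (a \in l) ==> P a (w a)].
apply: (@all_dbind _ _ _ _ (P b) (Pl (b :: l)) (dsP b)) => y Py.
apply: (@all_dbind _ _ _ _ (Pl l) (Pl (b :: l)) IHl) => w /forallP Pw /=; rewrite andbT.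
apply/forallP => a; rewrite in_cons; apply/implyP.
by case: eqVneq => [->|_] //= /(implyP (Pw a)).
Qed.

Hypothesis ds_valid : forall a, dvalid (ds a).

Lemma dprod_valid l : dvalid (dprod l).
Proof.
elim: l => [|a l IHl] /=; first exact: dunit_valid.
by apply: dbind_valid => // y; apply: dbind_valid => // w; apply: dunit_valid.
Qed.

Lemma dE_dprod_coord l a (phi : Y -> R) : a \in l ->
  dE (dprod l) (fun w => phi (w a)) = dE (ds a) phi.
Proof.
elim: l => [|b l IHl] //=; rewrite in_cons dE_bind.
case: eqVneq => [->|neq_ab] /= a_l.
  apply: eq_dE => y; rewrite dE_bind.
  under eq_dE do rewrite dE_unit eqxx.
  exact: dE_const (dprod_valid l).
under eq_dE => y do (rewrite dE_bind; under eq_dE do rewrite dE_unit (negbTE neq_ab)).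
by rewrite IHl // dE_const.
Qed.
End IndependentProduct.

Section OracleRun.
Variables (S X : finType) (f : nat -> S -> X -> R) (g : nat -> S -> X -> S).

Fixpoint orunD (d : hist S X -> dist X) (n t : nat) (s : S) (h : hist S X) (acc : R)
    : dist (S * R) :=
  match n with
  | 0 => dunit (s, acc)
  | n'.+1 => dbind (d h) (fun x =>
      orunD d n' t.+1 (g t s x) (rcons h (x, f t s x, g t)) (acc + f t s x))
  end.

Lemma orunE d n t s h acc k :
  orun f g d n t s h acc k = dE (orunD d n t s h acc) (fun o => k o.1 o.2).
Proof.
elim: n t s h acc => [|n IHn] t s h acc /=; first by rewrite dE_unit.
by rewrite dE_bind; apply: eq_dE => x; rewrite IHn.
Qed.

Lemma orunD_valid d n t s h acc :
  (forall h, dvalid (d h)) -> dvalid (orunD d n t s h acc).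
Proof.
move=> dV; elim: n t s h acc => [|n IHn] t s h acc /=; first exact: dunit_valid.
exact: dbind_valid.
Qed.

Lemma orunD_reward_range d n t s h (acc : R) :
  (forall t' s x, (t <= t' < t + n)%nat -> 0 <= f t' s x <= 1) ->
  all (fun o => acc <= o.2.2 <= acc + n%:R) (orunD d n t s h acc).
Proof.
elim: n t s h acc => [|n IHn] t s h acc f01 /=; first by rewrite addr0 lexx.
apply: (@all_dbind _ _ _ _ predT (fun o : S * R => acc <= o.2 <= acc + n.+1%:R)).
  exact/allP.
move=> x _; have /andP[f_ge0 f_le1] : 0 <= f t s x <= 1 by apply: f01; lia.
have f01' t' s' x' : (t.+1 <= t' < t.+1 + n)%nat -> 0 <= f t' s' x' <= 1.
  by move=> ?; apply: f01; lia.
(* [orun] accumulates with [Rplus]; naming the accumulator with the ring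
   addition (convertibly) makes it visible to [lra]. *)
apply: sub_all (IHn _ _ _ (acc + f t s x) f01') => o /andP[lo hi]; rewrite -natr1.
apply/andP; split; lra.
Qed.
End OracleRun.

Definition period_start (tau psi : nat) : nat := (psi.-1 * tau).+1.
Definition period_len (tau T psi : nat) : nat := minn T (psi * tau) - psi.-1 * tau.

Section Periods.
Variables (tau T : nat).
Hypothesis tau_gt0 : (0 < tau)%nat.
Local Notation N := (nperiods tau T).

Lemma nperiods_mul_le : (N * tau <= T + tau.-1)%nat.
Proof. exact: leq_divM. Qed.

Lemma nperiods_mul_ge : (T <= N * tau)%nat.
Proof. by have := ltn_ceil (T + tau.-1) tau_gt0; rewrite -/N mulSn; lia. Qed.

Lemma period_start_lt i : (i < N)%nat -> (i * tau < T)%nat.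
Proof.
move=> lt_iN; have : (i.+1 * tau <= N * tau)%nat by rewrite leq_mul2r lt_iN orbT.
by have := nperiods_mul_le; rewrite mulSn; lia.
Qed.

Lemma period_lenE i : (i < N)%nat ->
  period_len tau T i.+1 = (minn T (i.+1 * tau) - period_start tau i.+1).+1%nat.
Proof. by move/period_start_lt; rewrite /period_len /period_start /= mulSn; lia. Qed.

Lemma polsum_periods (S X : finType) f g (s1 : S) (gam : S -> X) :
  \sum_(i < N) polsum f g s1 gam (period_start tau i.+1) (minn T (i.+1 * tau)) =
  polsum f g s1 gam 1 T.
Proof.
suff sum_m m : (m <= N)%nat -> \sum_(i < m)
    polsum f g s1 gam (period_start tau i.+1) (minn T (i.+1 * tau)) =
  polsum f g s1 gam 1 (minn T (m * tau)).
  by rewrite sum_m // (minn_idPl nperiods_mul_ge).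
elim: m => [|m IHm] le_mN; first by rewrite big_ord0 /polsum mul0n minn0 big_geq.
have lt_mT := period_start_lt le_mN.
rewrite big_ord_recr IHm ?(ltnW le_mN) // (minn_idPr (ltnW lt_mT)).
by rewrite /polsum /period_start /= -big_cat_nat // mulSn; lia.
Qed.
End Periods.

Lemma polsum_le (S X : finType) f g (s1 : S) (gam : S -> X) (T : nat) :
  (forall t s x, (1 <= t <= T)%nat -> 0 <= f t s x <= 1) ->
  polsum f g s1 gam 1 T <= T%:R.
Proof.
move=> f01; apply: (@le_trans _ _ (\sum_(1 <= t < T.+1) (1 : R))).
  by apply: ler_sum_nat => t t_range; apply: (proj2 (andP (f01 t _ _ t_range))).
by rewrite sumr_const_nat subSS subn0.
Qed.

Lemma mbp_val_ge0 (A : finType) (Om : Type) alg (env : seq (Om * A) -> dist Om)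
    F pay n h :
  (forall h, dvalid (env h)) -> (forall h, dvalid (alg h)) ->
  (forall h, all (fun e => [forall a, 0 <= pay e.2 a]) (env h)) ->
  0 <= @mbp_val A Om alg env F pay n h.
Proof.
move=> envV algV pay_ge0; elim: n h => [|n IHn] h /=; first exact: lexx.
apply: dE_ge0; first by case/andP: (envV h).
apply: sub_all (pay_ge0 h) => e /forallP pay_e_ge0.
apply: dE_ge0; first by case/andP: (algV [seq (e0.2, F e0.1 e0.2) | e0 <- h]).
by apply/allP => e' _; rewrite addr_ge0.
Qed.

Section BanditReduction.
Variables (INF : mbp_alg) (S X A : finType) (pol : A -> S -> X) (O : oracle S X).
Variables (tau T : nat) (s1 : S) (f : nat -> S -> X -> R) (g : nat -> S -> X -> S).
Local Notation N := (nperiods tau T).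
Local Notation Om := (A -> S * R).

Definition period_run (a : A) (psi : nat) (s : S) : dist (S * R) :=
  orunD f g (O (pol a) (period_start tau psi) s) (period_len tau T psi)
    (period_start tau psi) s [::] 0.

Definition period_state (h : seq (Om * A)) : S :=
  foldl (fun s (e : Om * A) => (e.1 e.2).1) s1 h.

Definition period_env (h : seq (Om * A)) : dist Om :=
  dprod (s1, 0) (fun a => period_run a (size h).+1 (period_state h)) (enum A).

Definition period_reward (w : Om) (a : A) : R := (w a).2 / tau%:R.

Hypothesis INF_valid : forall h, dvalid (@INF A N h).
Hypothesis O_valid : forall gam t0 s0 h, dvalid (O gam t0 s0 h).
Hypothesis tau_gt0 : (0 < tau)%nat.
Hypothesis f01 : forall t s x, (1 <= t <= T)%nat -> 0 <= f t s x <= 1.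

Lemma period_run_valid a psi s : dvalid (period_run a psi s).
Proof. exact: orunD_valid. Qed.

Lemma period_env_valid h : dvalid (period_env h).
Proof. by apply: dprod_valid => a; apply: period_run_valid. Qed.

Lemma dE_period_env h a (phi : S * R -> R) :
  dE (period_env h) (fun w => phi (w a)) =
  dE (period_run a (size h).+1 (period_state h)) phi.
Proof. by rewrite dE_dprod_coord ?mem_enum // => b; apply: period_run_valid. Qed.

Lemma period_env_admissible h :
  dvalid (period_env h) &&
  all (fun e => [forall a, 0 <= period_reward e.2 a <= 1]) (period_env h).
Proof.
rewrite period_env_valid /=.
set psi := (size h).+1.
pose in01 (_ : A) (o : S * R) := 0 <= o.2 / tau%:R <= 1.
have run01 a : all (fun e => in01 a e.2) (period_run a psi (period_state h)).
  apply: sub_all (orunD_reward_range _ _ _ _ 0 _) => [e|t' s x].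
    rewrite add0r => /andP[e_ge0 e_le]; rewrite /in01 divr_ge0 //= ler_pdivrMr ?ltr0n //.
    by rewrite mul1r (le_trans e_le) // ler_nat /period_len; lia.
  by rewrite /period_start /period_len => ?; apply: f01; lia.
apply: sub_all (all_dprod _ _ run01) => w /forallP w01.
by apply/forallP => a; have := w01 a; rewrite mem_enum.
Qed.

Lemma mbp_val_played_arms n h :
  mbp_val (@INF A N) period_env period_reward period_reward n h =
  csval f g pol O INF tau T n (size h).+1 (period_state h)
    [seq (e.2, period_reward e.1 e.2) | e <- h] / tau%:R.
Proof.
elim: n h => [|n IHn] h /=; first by rewrite mul0r.
under eq_dE => w do under eq_dE => a do
  rewrite IHn size_rcons /period_state foldl_rcons map_rcons /=.
rewrite dE_swap mulr_dEl; apply: eq_dE => a.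
set next := csval _ _ _ _ _ _ _ n _.
pose phi (o : S * R) := o.2 / tau%:R +
  next o.1 (rcons [seq (e.2, period_reward e.1 e.2) | e <- h] (a, o.2 / tau%:R)) / tau%:R.
rewrite -[LHS]/(dE (period_env h) (fun w => phi (w a))) dE_period_env.
by rewrite orunE mulr_dEl; apply: eq_dE => o; rewrite mulrDl.
Qed.

Lemma csflp_reward_ge0 : 0 <= csflp_reward f g pol O INF tau T s1.
Proof.
have := @mbp_val_ge0 _ _ _ _ period_reward period_reward N [::] period_env_valid INF_valid.
rewrite mbp_val_played_arms pmulr_lge0 ?invr_gt0 ?ltr0n //; apply=> h.
case/andP: (period_env_admissible h) => _; apply: sub_all => e /forallP e01.
by apply/forallP => a; case/andP: (e01 a).
Qed.

Definition chase_reward (b : A) (psi : nat) : R :=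
  oexp f g O (pol b) (period_start tau psi) s1 (period_len tau T psi).

Lemma polsum_sub_chase_reward_le sigma b :
  chasing f g pol O s1 T sigma ->
  polsum f g s1 (pol b) 1 T - N%:R * sigma <= \sum_(i < N) chase_reward b i.+1.
Proof.
move=> chase; rewrite -(polsum_periods T tau_gt0).
have -> : N%:R * sigma = \sum_(i < N) sigma by rewrite sumr_const card_ord mulr_natl.
rewrite -sumrB; apply: ler_sum => i _.
have lt_iT := period_start_lt tau_gt0 (ltn_ord i).
have le_start : (period_start tau i.+1 <= minn T (i.+1 * tau))%nat.
  by rewrite /period_start /= mulSn; lia.
have := chase b _ _ s1 (ltn0Sn _) le_start (geq_minl _ _).
by rewrite /chase_reward period_lenE //; lra.
Qed.

Hypothesis O_stateless : stateless f g pol O T.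

Lemma chase_reward_from_any_state b psi s :
  oexp f g O (pol b) (period_start tau psi) s (period_len tau T psi) = chase_reward b psi.
Proof.
rewrite /chase_reward; case len_eq: (period_len tau T psi) => [//|m].
have le_T : (period_start tau psi + m <= T)%nat.
  by move: len_eq; rewrite /period_len /period_start; lia.
by have := @O_stateless b _ _ s s1 (ltn0Sn _) (leq_addr m _) le_T; rewrite addKn.
Qed.

Lemma mbp_val_fixed_arm b n h :
  mbp_val (@INF A N) period_env period_reward (fun w _ => period_reward w b) n h =
  \sum_(i < n) chase_reward b (size h + i).+1 / tau%:R.
Proof.
elim: n h => [|n IHn] h /=; first by rewrite big_ord0.
under eq_dE => w do under eq_dE => a do rewrite IHn size_rcons.
under eq_dE => w do rewrite dE_const //.
rewrite dE_add dE_const ?period_env_valid // big_ord_recl addn0.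
congr (_ + _); last by apply: eq_bigr => i _; rewrite lift0 addSn addnS.
rewrite -[LHS]/(dE (period_env h) (fun w => (fun o : S * R => o.2 / tau%:R) (w b))).
by rewrite dE_period_env -mulr_dEl -(chase_reward_from_any_state _ _ (period_state h)) /oexp orunE.
Qed.

Lemma csflp_regret_le_bandit (C : R) b :
  mbp_guarantee INF C -> (0 < #|A|)%nat ->
  (\sum_(i < N) chase_reward b i.+1 - csflp_reward f g pol O INF tau T s1) / tau%:R
  <= C * Num.sqrt (#|A|%:R * N%:R).
Proof.
move=> INF_regret A_gt0.
have := INF_regret A Om N period_env period_reward A_gt0 period_env_admissible b.
rewrite mbp_val_fixed_arm (mbp_val_played_arms _ [::]) mulrBl mulr_suml.
by under eq_bigr do rewrite add0n.
Qed.
End BanditReduction.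

Section RegretArithmetic.
Variable F : rcfType.

Lemma le_sqrtr (x y : F) : 0 <= x -> x ^+ 2 <= y -> x <= Num.sqrt y.
Proof.
move=> x_ge0 le_x2y; have y_ge0 : 0 <= y by apply: le_trans le_x2y; apply: sqr_ge0.
by rewrite -(ger0_norm x_ge0) -sqrtr_sqr ler_sqrt.
Qed.

Lemma mulr_sqrt_nperiods_le (a N tau T : F) :
  0 <= a -> 0 <= N -> 0 < tau -> tau <= T -> N * tau <= T + tau ->
  tau * Num.sqrt (a * N) <= 2 * Num.sqrt (a * T * tau).
Proof.
move=> a_ge0 N_ge0 tau_gt0 le_tauT le_NtauT.
have tau_ge0 := ltW tau_gt0; have T_ge0 := le_trans tau_ge0 le_tauT.
have atau_ge0 := mulr_ge0 a_ge0 tau_ge0.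
rewrite -ler_sqr ?nnegrE ?mulr_ge0 ?sqrtr_ge0 ?ler0n //.
rewrite !exprMn !sqr_sqrtr ?mulr_ge0 //.
rewrite -subr_ge0 in le_NtauT; rewrite -subr_ge0 in le_tauT.
have := mulr_ge0 atau_ge0 T_ge0.
have := mulr_ge0 atau_ge0 le_NtauT; have := mulr_ge0 atau_ge0 le_tauT.
lra.
Qed.

Lemma chase_bandit_regret_le (P cs SE sigma C tau T a N : F) :
  0 < sigma < tau -> 1 <= a -> 0 <= T -> 0 <= N -> N * tau <= T + tau ->
  P <= T -> 0 <= cs -> P - N * sigma <= SE -> (SE - cs) / tau <= C * Num.sqrt (a * N) ->
  P - cs <= (2 + 2 * Num.max C 0) * (sigma * T / tau + Num.sqrt (a * T * tau)).
Proof.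
move=> /andP[sigma_gt0 lt_sigma_tau] a_ge1 T_ge0 N_ge0 le_NtauT le_PT cs_ge0 chase bandit.
have tau_gt0 := lt_trans sigma_gt0 lt_sigma_tau; have tau_ge0 := ltW tau_gt0.
have a_ge0 := le_trans ler01 a_ge1.
set Q := Num.sqrt (a * T * tau); set x := sigma * T / tau; set Cp := Num.max C 0.
have Cp_ge0 : 0 <= Cp by rewrite le_max lexx orbT.
have le_CCp : C <= Cp by rewrite le_max lexx.
have Q_ge0 : 0 <= Q := sqrtr_ge0 _.
have x_ge0 : 0 <= x := divr_ge0 (mulr_ge0 (ltW sigma_gt0) T_ge0) tau_ge0.
have CpQ_ge0 : 0 <= Cp * Q := mulr_ge0 Cp_ge0 Q_ge0.
have Cpx_ge0 : 0 <= Cp * x := mulr_ge0 Cp_ge0 x_ge0.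
have le_Q y : 0 <= y -> y <= T -> y <= tau -> y <= Q.
  move=> y_ge0 le_yT le_ytau; apply: le_sqrtr => //; rewrite expr2.
  rewrite -subr_ge0 in le_ytau; rewrite -subr_ge0 in a_ge1.
  have := mulr_ge0 y_ge0 le_ytau; have := mulr_ge0 (mulr_ge0 y_ge0 tau_ge0) a_ge1.
  have := ler_wpM2r (mulr_ge0 a_ge0 tau_ge0) le_yT; lra.
have -> : (2 + 2 * Cp) * (x + Q) = 2 * (x + Q) + 2 * (Cp * x) + 2 * (Cp * Q) by ring.
have [lt_Ttau|le_tauT] := ltP T tau.
  by have := le_Q T T_ge0 (lexx T) (ltW lt_Ttau); lra.
have le_tauQ := le_Q tau tau_ge0 le_tauT (lexx tau).
have le_Nsigma : N * sigma <= x + sigma.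
  rewrite -(ler_pM2r tau_gt0) mulrDl /x divfK ?gt_eqF //.
  rewrite -subr_ge0 in le_NtauT; have := mulr_ge0 (ltW sigma_gt0) le_NtauT; lra.
have le_bandit : SE - cs <= Cp * (2 * Q).
  have tau_u_ge0 := mulr_ge0 tau_ge0 (sqrtr_ge0 (a * N)).
  have := mulr_sqrt_nperiods_le a_ge0 N_ge0 tau_gt0 le_tauT le_NtauT.
  move/(ler_wpM2l Cp_ge0); rewrite -subr_ge0 in le_CCp.
  have := mulr_ge0 le_CCp tau_u_ge0.
  rewrite ler_pdivrMr // mulrC in bandit; rewrite -/Q; lra.
lra.
Qed.
End RegretArithmetic.

Theorem theorem10 (INF : mbp_alg) (C : R) :
  (forall (A : finType) (Psi : nat) (h : seq (A * R)), dvalid (@INF A Psi h)) ->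
  mbp_guarantee INF C ->
  exists K : R,
  forall (S X A : finType) (feas : S -> X -> bool) (pol : A -> S -> X)
         (O : oracle S X) (sigma : R) (tau T : nat) (s1 : S)
         (f : nat -> S -> X -> R) (g : nat -> S -> X -> S),
    (forall a b, pol a =1 pol b -> a = b) ->
    (0 < #|A|)%nat ->
    (forall a s, feas s (pol a s)) ->
    (forall t s x, (1 <= t <= T)%nat -> 0 <= f t s x <= 1) ->
    oracle_valid feas O ->
    chasing f g pol O s1 T sigma ->
    stateless f g pol O T ->
    0 < sigma -> sigma < tau%:R ->
    forall a : A,
      polsum f g s1 (pol a) 1 T - csflp_reward f g pol O INF tau T s1
      <= K * (sigma * T%:R / tau%:R + Num.sqrt (#|A|%:R * T%:R * tau%:R)).
Proof.
move=> INF_valid INF_regret; exists (2 + 2 * Num.max C 0).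
move=> S X A feas pol O sigma tau T s1 f g _ A_gt0 _ f01 O_feas chase O_stateless.
move=> sigma_gt0 lt_sigma_tau b.
have O_valid gam t0 s0 h : dvalid (O gam t0 s0 h) by case: (O_feas gam t0 s0 h).
have tau_gt0 : (0 < tau)%nat by rewrite -(ltr0n R) (lt_trans sigma_gt0).
apply: (chase_bandit_regret_le (N := (nperiods tau T)%:R)
  (SE := \sum_(i < nperiods tau T) chase_reward pol O tau T s1 f g b i.+1)).
- by rewrite sigma_gt0 lt_sigma_tau.
- by rewrite ler1n.
- exact: ler0n.
- exact: ler0n.
- rewrite -natrM -natrD ler_nat; apply: leq_trans (nperiods_mul_le _ _) _.
  by rewrite leq_add2l leq_pred.
- exact: polsum_le.
- exact: csflp_reward_ge0.
- exact: polsum_sub_chase_reward_le.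
- exact: csflp_regret_le_bandit.
Qed.
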